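(* Let $p$ be a prime, $k\ge1$, $\Gamma=\mathbb{Z}_p\,\mathrm{wr}\,\mathbb{Z}^k=\Sigma\rtimes_\alpha\mathbb{Z}^k$, and let $\phi:\Gamma\to\Gamma$ be an automorphism with restriction $\phi'=\phi|_\Sigma$ and induced automorphism $\overline{\phi}:\mathbb{Z}^k\to\mathbb{Z}^k$ on $\Gamma/\Sigma\cong\mathbb{Z}^k$, such that $\phi'(\delta_0)=m\,\delta_0$ for some $0\ne m\in\mathbb{Z}_p$ (so $\phi'(\delta_x)=m\,\delta_{\overline{\phi}(x)}$ for all $x$). Let $x\in\mathbb{Z}^k$ have infinite $\overline{\phi}$-orbit, and let $B=\bigoplus_{n\in\mathbb{Z}}A_{\overline{\phi}^n(x)}\subset\Sigma$, which is invariant under $1-\phi'$. Then the restriction of $1-\phi'$ to $B$ is not an epimorphism onto $B$.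
   Context: $\mathbb{Z}_p\,\mathrm{wr}\,\mathbb{Z}^k$ is $\Sigma\rtimes_\alpha\mathbb{Z}^k$ with $\Sigma=\bigoplus_{x\in\mathbb{Z}^k}A_x$ (finitely supported), $A_x\cong\mathbb{Z}_p$ generated by $\delta_x$, and $\alpha(y)(\delta_x)=\delta_{y+x}$. $\Sigma$ is characteristic (torsion subgroup). Here $1-\phi'$ denotes the endomorphism $h\mapsto h-\phi'(h)$ of the abelian group $\Sigma$. *)

From mathcomp Require Import all_boot all_order all_algebra.
Set Implicit Arguments. Unset Strict Implicit. Unset Printing Implicit Defensive.
Import GRing.Theory.
Local Open Scope ring_scope.

(* An element of Sigma is a finitely
   supported function Z^k -> Z_p.  The wreath product Gamma = Sigma x| Z^k is
   modelled as the subset of pairs (sigma, y) with sigma finitely supported,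
   with the semidirect product law (alpha(y) tau)(w) = tau (w - y). *)

Definition finsupp (p k : nat) (f : 'rV[int]_k -> 'Z_p) : Prop :=
  exists s : seq 'rV[int]_k, forall y, f y != 0 -> y \in s.

Definition WR (p k : nat) : Type := (('rV[int]_k -> 'Z_p) * 'rV[int]_k)%type.

Definition inWR (p k : nat) (g : WR p k) : Prop := finsupp g.1.

Definition wr_mul (p k : nat) (g h : WR p k) : WR p k :=
  (fun w => g.1 w + h.1 (w - g.2), g.2 + h.2).

Definition is_aut (p k : nat) (phi : WR p k -> WR p k) : Prop :=
  [/\ (forall g, inWR g -> inWR (phi g)),
      (forall g h, inWR g -> inWR h -> phi g = phi h -> g = h),
      (forall g, inWR g -> exists h, inWR h /\ phi h = g) &
      (forall g h, inWR g -> inWR h -> phi (wr_mul g h) = wr_mul (phi g) (phi h))].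

Definition delta (p k : nat) (x : 'rV[int]_k) : 'rV[int]_k -> 'Z_p :=
  fun w => (w == x)%:R.

(* phi' = restriction of phi to Sigma = {(sigma, 0)} (Sigma is characteristic) *)
Definition restr (p k : nat) (phi : WR p k -> WR p k) (s : 'rV[int]_k -> 'Z_p)
  : 'rV[int]_k -> 'Z_p := (phi (s, 0)).1.

(* induced automorphism on Gamma/Sigma = Z^k (quotient map = second projection) *)
Definition induced (p k : nat) (phi : WR p k -> WR p k) (x : 'rV[int]_k)
  : 'rV[int]_k := (phi (fun _ => 0, x)).2.

(* y lies in the Z-orbit of x under the bijection f: y = f^n x for some n in Z *)
Definition in_orbit (k : nat) (f : 'rV[int]_k -> 'rV[int]_k) (x y : 'rV[int]_k)
  : Prop := exists n : nat, iter n f x = y \/ iter n f y = x.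

Definition infinite_orbit (k : nat) (f : 'rV[int]_k -> 'rV[int]_k) (x : 'rV[int]_k)
  : Prop := ~ exists s : seq 'rV[int]_k, forall y, in_orbit f x y -> y \in s.

Definition inB (p k : nat) (f : 'rV[int]_k -> 'rV[int]_k) (x : 'rV[int]_k)
  (s : 'rV[int]_k -> 'Z_p) : Prop :=
  finsupp s /\ forall y, s y != 0 -> in_orbit f x y.

(* Sigma is the p-torsion of Gamma and Z^k is torsion-free, so phi maps Sigma
   into itself and phi' is additive; the conjugation relation
   (0,y) (delta_0,0) = (delta_y,0) (0,y) then gives phi'(delta_y) = m delta_(f y)
   for the injective induced map f.  Thus phi'(h) (f y) = m h(y), and phi'(h)
   vanishes off the image of f.
   Suppose h in B solves h - phi'(h) = delta_x, so that h = phi'(h) off x.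
   If h(x) = 0, then phi'(h) is nonzero on x and on the support S of h, whence
   {x} u S lies in f(S): impossible by counting.  If h(x) <> 0, then
   h(f^(n+1) x) = m h(f^n x) <> 0 for every n, since the orbit never returns
   to x; so the infinite forward orbit of x lies in the finite support of h. *)

From mathcomp Require Import all_boot all_order all_algebra.
From Stdlib Require Import FunctionalExtensionality.
Set Implicit Arguments. Unset Strict Implicit. Unset Printing Implicit Defensive.
Import GRing.Theory Num.Theory.
Local Open Scope ring_scope.

Section Supports.
Variables p k : nat.
Implicit Types (s t : 'rV[int]_k -> 'Z_p) (y c : 'rV[int]_k).

Lemma finsupp0 : finsupp (fun _ : 'rV[int]_k => 0 : 'Z_p).
Proof. by exists [::] => y; rewrite eqxx. Qed.

Lemma finsupp_delta y : finsupp (@delta p k y).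
Proof. by exists [:: y] => w; rewrite /delta inE; case: (w =P y) => // _; rewrite eqxx. Qed.

Lemma finsupp_map2 (F : 'Z_p -> 'Z_p -> 'Z_p) s t :
  F 0 0 = 0 -> finsupp s -> finsupp t -> finsupp (fun w => F (s w) (t w)).
Proof.
move=> F00 [ss hs] [st ht]; exists (ss ++ st) => y; rewrite mem_cat.
have [sy0|/hs -> //] := eqVneq (s y) 0; have [ty0|/ht ->] := eqVneq (t y) 0.
  by rewrite sy0 ty0 F00 eqxx.
by rewrite orbT.
Qed.

Lemma finsupp_shift s c : finsupp s -> finsupp (fun w => s (w - c)).
Proof.
move=> [ss hs]; exists [seq y + c | y <- ss] => y /hs sy.
by apply/mapP; exists (y - c); rewrite ?subrK.
Qed.

Lemma finsupp_ind (P : ('rV[int]_k -> 'Z_p) -> Prop) :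
  P (fun _ => 0) ->
  (forall s y (c : nat), finsupp s -> P s -> P (fun w => s w + delta p y w *+ c)) ->
  forall s, finsupp s -> P s.
Proof.
move=> P0 PD s [ys]; elim: ys s => [|y ys IH] s sys.
  have -> // : s = (fun _ => 0).
  by apply: functional_extensionality => w; apply/eqP; apply: contraT => /sys.
pose s' w := if w == y then 0 else s w.
have s'ys : forall w, s' w != 0 -> w \in ys.
  rewrite /s' => w; case: (w =P y) => [_|/eqP wy]; first by rewrite eqxx.
  by move/sys; rewrite inE (negbTE wy).
have -> : s = (fun w => s' w + delta p y w *+ s y).
  apply: functional_extensionality => w; rewrite /s' /delta.
  by case: (w =P y) => [->|_]; rewrite ?add0r ?mulr1n ?natr_Zp // mul0rn addr0.
by apply: PD; [exists ys | exact: IH].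
Qed.

End Supports.

#[local] Hint Resolve finsupp0 finsupp_delta : core.

Definition wr1 p k : WR p k := (fun _ => 0, 0).

Definition wr_exp p k (g : WR p k) n : WR p k := iter n (wr_mul g) (wr1 p k).

Section WreathProduct.
Variables p k : nat.
Implicit Types (g h : WR p k) (s t : 'rV[int]_k -> 'Z_p) (y z : 'rV[int]_k).

Lemma inWR_wr1 : inWR (wr1 p k).
Proof. exact: finsupp0. Qed.

Lemma inWR_mul g h : inWR g -> inWR h -> inWR (wr_mul g h).
Proof.
move=> gS hS; apply: (finsupp_map2 (F := +%R)) => //; first by rewrite addr0.
exact: finsupp_shift.
Qed.

Lemma inWR_exp g n : inWR g -> inWR (wr_exp g n).
Proof. by move=> gS; elim: n => [|n IH]; [exact: inWR_wr1 | exact: inWR_mul]. Qed.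

Lemma wr_mul1g g : wr_mul (wr1 p k) g = g.
Proof.
case: g => a y; rewrite /wr_mul /= add0r; congr pair.
by apply: functional_extensionality => w; rewrite add0r subr0.
Qed.

Lemma wr_mul_idem g : wr_mul g g = g -> g = wr1 p k.
Proof.
case: g => a y [a_idem y_idem].
have y0 : y = 0 by apply: (@addrI _ y); rewrite addr0.
rewrite /wr1 y0; congr pair; apply: functional_extensionality => w.
have /= := congr1 (fun b => b w) a_idem; rewrite y0 subr0 => aw.
by apply: (@addrI _ (a w)); rewrite addr0.
Qed.

Lemma wr_mul_sigma s t : wr_mul (s, 0) (t, 0) = (fun w => s w + t w, 0).
Proof.
rewrite /wr_mul /= addr0; congr pair.
by apply: functional_extensionality => w; rewrite subr0.
Qed.

Lemma wr_mul_top y z :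
  wr_mul (fun _ => 0, y) (fun _ => 0, z) = (fun _ => 0 : 'Z_p, y + z).
Proof. by rewrite /wr_mul /= addr0. Qed.

Lemma wr_exp2 g n : (wr_exp g n).2 = g.2 *+ n.
Proof. by elim: n => [|n IH] /=; rewrite ?mulr0n // IH mulrS. Qed.

Lemma wr_exp_sigma s n : wr_exp (s, 0) n = (fun w => s w *+ n, 0).
Proof.
elim: n => [|n IH] /=.
  by congr pair; apply: functional_extensionality => w; rewrite mulr0n.
rewrite IH wr_mul_sigma; congr pair.
by apply: functional_extensionality => w; rewrite mulrS.
Qed.

Lemma wr_exp_sigma_char s : prime p -> wr_exp (s, 0) p = wr1 p k.
Proof.
move=> p_pr; rewrite wr_exp_sigma; congr pair.
apply: functional_extensionality => w.
by rewrite -mulr_natr pchar_Zp ?mulr0 ?prime_gt1.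
Qed.

End WreathProduct.

Lemma rv_int_torsionfree k n (y : 'rV[int]_k) : (0 < n)%N -> y *+ n = 0 -> y = 0.
Proof.
move=> n_gt0 /matrixP ny0; apply/matrixP => i j; have /eqP := ny0 i j.
by rewrite mulmxnE !mxE mulrn_eq0 eqn0Ngt n_gt0 => /eqP.
Qed.

Lemma Zp_unit_prime p (a : 'Z_p) : prime p -> a != 0 -> a \is a GRing.unit.
Proof.
move=> p_pr a_neq0; rewrite -(natr_Zp a) unitZpE ?prime_gt1 // prime_coprime //.
have p_gt1 := prime_gt1 p_pr.
rewrite gtnNdvd //; last by have := ltn_ord a; rewrite [X in (_ < X)%N -> _]Zp_cast.
by rewrite lt0n; apply: contraNneq a_neq0 => a0; apply/eqP/val_inj.
Qed.

Section Automorphism.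
Variables (p k : nat) (phi : WR p k -> WR p k).
Hypotheses (p_pr : prime p) (phi_aut : is_aut phi).
Implicit Types (g h : WR p k) (s t : 'rV[int]_k -> 'Z_p) (y z : 'rV[int]_k).

Local Notation f := (induced phi).

Lemma phi_mul g h : inWR g -> inWR h -> phi (wr_mul g h) = wr_mul (phi g) (phi h).
Proof. by case: phi_aut => _ _ _; apply. Qed.

Lemma phi_wr1 : phi (wr1 p k) = wr1 p k.
Proof. by apply: wr_mul_idem; rewrite -phi_mul ?wr_mul1g //; exact: inWR_wr1. Qed.

Lemma phi_exp g n : inWR g -> phi (wr_exp g n) = wr_exp (phi g) n.
Proof.
move=> gS; elim: n => [|n IH] /=; first exact: phi_wr1.
by rewrite phi_mul ?IH //; exact: inWR_exp.
Qed.

Lemma phi_sigma s : finsupp s -> phi (s, 0) = (restr phi s, 0).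
Proof.
move=> sS; rewrite [LHS]surjective_pairing; congr pair.
apply: (rv_int_torsionfree (prime_gt0 p_pr)); rewrite -wr_exp2 -phi_exp //.
by rewrite wr_exp_sigma_char // phi_wr1.
Qed.

Lemma phi2_eq0 g : inWR g -> (phi g).2 = 0 -> g.2 = 0.
Proof.
move=> gS phig2; apply: (rv_int_torsionfree (prime_gt0 p_pr)); rewrite -wr_exp2.
have [_ phi_inj _ _] := phi_aut.
have -> // := phi_inj _ _ (inWR_exp p gS) (inWR_wr1 p k).
by rewrite phi_exp // phi_wr1 [phi g]surjective_pairing phig2 wr_exp_sigma_char.
Qed.

Lemma restr_add s t : finsupp s -> finsupp t ->
  restr phi (fun w => s w + t w) = (fun w => restr phi s w + restr phi t w).
Proof.
move=> sS tS; rewrite /restr -wr_mul_sigma phi_mul // !phi_sigma //.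
by rewrite wr_mul_sigma.
Qed.

Lemma restr0 : restr phi (fun _ => 0) = (fun _ => 0).
Proof. by rewrite /restr -/(wr1 p k) phi_wr1. Qed.

Lemma restr_muln s n : finsupp s ->
  restr phi (fun w => s w *+ n) = (fun w => restr phi s w *+ n).
Proof.
move=> sS; elim: n => [|n IH].
  have -> : (fun w => s w *+ 0) = (fun _ => 0) by [].
  by rewrite restr0.
have -> : (fun w => s w *+ n.+1) = (fun w => s w + s w *+ n).
  by apply: functional_extensionality => w; rewrite mulrS.
rewrite restr_add ?IH //; last first.
  by apply: (@finsupp_map2 p k (fun a _ => a *+ n) s s); rewrite ?mul0rn.
by apply: functional_extensionality => w; rewrite mulrS.
Qed.

Lemma induced_add y z : f (y + z) = f y + f z.
Proof.
by rewrite /induced -wr_mul_top phi_mul //; exact: finsupp0.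
Qed.

Lemma induced_inj : injective f.
Proof.
move=> y z fyz; apply/subr0_eq.
have fB : f (y - z) = 0.
  by apply: (@addIr _ (f z)); rewrite -induced_add subrK add0r.
by apply: (phi2_eq0 (g := (fun _ => 0, y - z))) => //; exact: finsupp0.
Qed.

Variable m : 'Z_p.
Hypothesis phi_delta0 : restr phi (delta p 0) = (fun w => m * delta p 0 w).

Lemma restr_delta y : restr phi (delta p y) = (fun w => m * delta p (f y) w).
Proof.
have conj_delta : wr_mul (fun _ => 0, y) (delta p 0, 0) = wr_mul (delta p y, 0) (fun _ => 0, y).
  rewrite /wr_mul /= addr0 add0r; congr pair.
  by apply: functional_extensionality => w; rewrite /delta add0r addr0 subr_eq0.
have topS : inWR ((fun _ => 0, y) : WR p k) by exact: finsupp0.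
move/(congr1 phi): conj_delta; rewrite !phi_mul ?phi_sigma ?phi_delta0 //;
  try exact: finsupp_delta.
rewrite [phi (_, y)]surjective_pairing /wr_mul /= => -[E _].
apply: functional_extensionality => w; have /= := congr1 (fun b => b w) E.
by rewrite subr0 addrC /delta subr_eq0 -/(f y) => /addIr.
Qed.

Lemma restr_add_delta s y (c : nat) : finsupp s ->
  restr phi (fun w => s w + delta p y w *+ c) =
  (fun w => restr phi s w + m * delta p (f y) w *+ c).
Proof.
move=> sS; rewrite restr_add ?restr_muln ?restr_delta //.
by apply: (@finsupp_map2 p k (fun a _ => a *+ c) _ (delta p y)); rewrite ?mul0rn.
Qed.

Lemma restr_induced s : finsupp s -> forall y, restr phi s (f y) = m * s y.
Proof.
move: s; apply: finsupp_ind => [y|s z c sS IH y]; first by rewrite restr0 mulr0.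
by rewrite restr_add_delta // IH mulrDr /delta (inj_eq induced_inj) -mulrnAr.
Qed.

Lemma restr_support s : finsupp s -> forall w, restr phi s w != 0 -> exists z, f z = w.
Proof.
move: s; apply: finsupp_ind => [w|s z c sS IH w]; first by rewrite restr0 eqxx.
rewrite restr_add_delta //; have [->|/IH //] := eqVneq (restr phi s w) 0.
rewrite add0r /delta; case: (w =P f z) => [->|_]; first by exists z.
by rewrite mulr0 mul0rn eqxx.
Qed.

End Automorphism.

Section Iteration.
Variables (T : Type) (f : T -> T).

Lemma iter_inj n : injective f -> injective (iter n f).
Proof. by move=> f_inj; elim: n => [|n IH] //= a b /f_inj /IH. Qed.

Lemma iter_periodic d x q : iter d f x = x -> iter q f x = iter (q %% d) f x.
Proof.
move=> per; rewrite {1}(divn_eq q d) addnC iterD.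
by congr iter; rewrite iterM iter_fix.
Qed.

End Iteration.

Section Orbits.
Variables (k : nat) (f : 'rV[int]_k -> 'rV[int]_k) (x : 'rV[int]_k).
Hypotheses (f_inj : injective f) (x_inf : infinite_orbit f x).

Lemma iter_orbit_neq n : iter n.+1 f x != x.
Proof.
apply/eqP => per; apply: x_inf; exists [seq iter i f x | i <- iota 0 n.+1].
have fwd q : iter q f x \in [seq iter i f x | i <- iota 0 n.+1].
  by apply/mapP; exists (q %% n.+1)%N; rewrite ?mem_iota ?ltn_mod -?(iter_periodic _ per).
move=> y [q [<-|yqx]]; first exact: fwd.
(* f^q y = x = f^(q (n+1)) x *)
suff -> : y = iter (q * n) f x by exact: fwd.
by apply: (iter_inj (n := q) f_inj); rewrite yqx -iterD addnC -mulnSr iterM iter_fix.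
Qed.

Lemma iter_orbit_inj : injective (fun n => iter n f x).
Proof.
have neq i d : iter (i + d.+1) f x != iter i f x.
  by rewrite iterD (inj_eq (iter_inj (n := i) f_inj)) iter_orbit_neq.
move=> i j /= eq_ij; case: (ltngtP i j) => [lt|lt|//];
  [have := neq i (j - i.+1)%N | have := neq j (i - j.+1)%N];
  by rewrite addnS -addSn subnKC // eq_ij eqxx.
Qed.

Lemma forward_orbit_unbounded (s : seq 'rV[int]_k) : ~ (forall n, iter n f x \in s).
Proof.
move=> orbit_s; pose O := [seq iter i f x | i <- iota 0 (size s).+1].
have O_uniq : uniq O by rewrite map_inj_uniq ?iota_uniq //; exact: iter_orbit_inj.
have O_s : {subset O <= s} by move=> _ /mapP [i _ ->].
by have := uniq_leq_size O_uniq O_s; rewrite size_map size_iota ltnn.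
Qed.

End Orbits.

Lemma inB_delta p k (f : 'rV[int]_k -> 'rV[int]_k) x : inB f x (delta p x).
Proof.
split=> [|y]; first exact: finsupp_delta.
by rewrite /delta; case: (y =P x) => [-> _|_]; [exists 0%N; left | rewrite eqxx].
Qed.

Section DeltaNotInImage.
Variables (p k : nat) (phi : WR p k -> WR p k) (m : 'Z_p) (x : 'rV[int]_k).
Hypotheses (p_pr : prime p) (phi_aut : is_aut phi) (m_neq0 : m != 0).
Hypothesis phi_delta0 : restr phi (delta p 0) = (fun w => m * delta p 0 w).
Hypothesis x_inf : infinite_orbit (induced phi) x.
Variable h : 'rV[int]_k -> 'Z_p.
Hypotheses (h_fin : finsupp h) (h_eq : forall w, h w - restr phi h w = delta p x w).

Local Notation f := (induced phi).

Lemma restr_off_x y : y != x -> restr phi h y = h y.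
Proof. by move=> yx; apply/esym/subr0_eq; rewrite h_eq /delta (negbTE yx). Qed.

Lemma solution_neq0_at_x : h x != 0.
Proof.
apply/negP => /eqP hx0; have [s hs] := h_fin.
pose S := [seq y <- undup s | h y != 0].
have memS y : (y \in S) = (h y != 0).
  by rewrite mem_filter mem_undup andb_idr //; exact: hs.
have restr_x : restr phi h x != 0.
  have := h_eq x; rewrite hx0 /delta eqxx sub0r => /eqP.
  by rewrite eqr_oppLR => /eqP ->; rewrite oppr_eq0 oner_eq0.
have S_f : {subset x :: S <= map f S}.
  move=> y; rewrite inE memS => /orP yS.
  have ry : restr phi h y != 0.
    case: yS => [/eqP -> //|hy]; rewrite restr_off_x //.
    by apply: contraNneq hy => ->; rewrite hx0.
  have [z fz] := restr_support p_pr phi_aut phi_delta0 h_fin ry.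
  rewrite -fz map_f // memS; apply: contraNneq ry => hz0.
  by rewrite -fz (restr_induced p_pr phi_aut phi_delta0) // hz0 mulr0.
have xS_uniq : uniq (x :: S) by rewrite /= memS hx0 eqxx filter_uniq ?undup_uniq.
by have := uniq_leq_size xS_uniq S_f; rewrite size_map ltnn.
Qed.

Lemma solution_neq0_on_orbit n : h (iter n f x) != 0.
Proof.
elim: n => [|n IH]; first exact: solution_neq0_at_x.
rewrite iterS -restr_off_x ?(iter_orbit_neq (induced_inj p_pr phi_aut)) //.
rewrite (restr_induced p_pr phi_aut phi_delta0) //.
by rewrite (mulrI_eq0 _ (mulrI (Zp_unit_prime p_pr m_neq0))).
Qed.

End DeltaNotInImage.

Theorem lemma3p2 (p k : nat) (hp : prime p) (hk : (0 < k)%N)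
  (phi : WR p k -> WR p k) (haut : is_aut phi)
  (m : 'Z_p) (hm : m != 0)
  (hdelta : restr phi (@delta p k 0) = (fun w => m * @delta p k 0 w))
  (x : 'rV[int]_k) (hx : infinite_orbit (induced phi) x) :
  ~ (forall b, inB (induced phi) x b ->
       exists h, inB (induced phi) x h /\ (fun w => h w - restr phi h w) = b).
Proof.
move=> onto; have [h [[h_fin _] h_eq]] := onto _ (inB_delta p (induced phi) x).
have h_eq_at w : h w - restr phi h w = delta p x w by rewrite -h_eq.
have [s hs] := h_fin.
apply: (forward_orbit_unbounded (induced_inj hp haut) hx (s := s)) => n.
by apply/hs/(solution_neq0_on_orbit hp haut hm hdelta hx h_fin h_eq_at).
Qed.
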